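(* Let $m$ be the weight defined below; all implicit constants are absolute. Then: (i) There is an absolute constant $C$ such that $1\le m(t,k,\eta)\le C$ for all $t\ge0$, $(k,\eta)\in\mathbb Z\times\mathbb R$. (ii) If $t\ge0$, $k\neq0$ and $(l,\xi)\in S_t$, then $\dfrac{1}{1+|t-\eta/k|}\lesssim\sqrt{\tfrac{\partial_tm}{m}(t,l,\xi)}\,\langle k-l,\eta-\xi\rangle^3$. (iii) If $t\ge1$, $k\neq0$ and $|k,\eta|\le2|l,\xi|$, then $$\frac{|k,\eta|}{k^2}\frac{1}{1+|t-\eta/k|^2}\lesssim\frac{\langle\eta/k^3\rangle^{1/2}}{1+|t-\eta/k|}\Big(1+\sqrt t\sqrt{\tfrac{\partial_tm}{m}(t,l,\xi)}\Big)\langle k-l,\eta-\xi\rangle^5+\frac{1}{\langle t\rangle^2}.$$ (iv) For all $t\ge0$, $\eta,\xi\in\mathbb R$ and $k\neq0$: $|m(t,k,\eta)-m(t,k,\xi)|\lesssim\dfrac{|\eta-\xi|}{|k|}$.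
   Context: For $(k,\eta)\in\mathbb Z\times\mathbb R$ write $|k,\eta|=|k|+|\eta|$ and $\langle k,\eta\rangle=(1+|k|^2+|\eta|^2)^{1/2}$, $\langle x\rangle=(1+x^2)^{1/2}$. Let $S_t=\{(k,\eta)\in\mathbb Z\times\mathbb R: |k,\eta|\le10t^2\}$. The weight $m(t,k,\eta)$ is defined by $m(0,k,\eta)=1$ and $\partial_tm(t,k,\eta)=\sup_{j\in\mathbb Z\setminus\{0\}}\Big(\frac{10}{1+(\eta/j-t)^2}\frac{1}{\langle k-j\rangle^3}\Big)m(t,k,\eta)$ if $(k,\eta)\in S_t$, and $\partial_tm(t,k,\eta)=0$ otherwise. *)

From Stdlib Require Import Reals ZArith.
From Coquelicot Require Import Coquelicot.
Open Scope R_scope.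

Definition absKE (k : Z) (eta : R) : R := Rabs (IZR k) + Rabs eta.
Definition jbrKE (k : Z) (eta : R) : R := sqrt (1 + (IZR k)^2 + eta^2).
Definition jbr (x : R) : R := sqrt (1 + x^2).

Definition inS (t : R) (k : Z) (eta : R) : Prop := absKE k eta <= 10 * t^2.

Definition coefj (t : R) (k : Z) (eta : R) (j : Z) : R :=
  10 / (1 + (eta / IZR j - t)^2) * / (jbr (IZR (k - j)))^3.

(* sup over j in Z \ {0} (the set is nonempty and bounded by 10) *)
Definition supcoef (t : R) (k : Z) (eta : R) : R :=
  real (Lub_Rbar (fun x => exists j : Z, j <> 0%Z /\ x = coefj t k eta j)).

Definition dtm_over_m (t : R) (k : Z) (eta : R) : R :=
  if Rle_dec (absKE k eta) (10 * t^2) then supcoef t k eta else 0.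

(* The weight m: the (absolutely continuous) solution of
   d_t m = (dtm_over_m) m, m(0) = 1, i.e. m = exp (int_0^t dtm_over_m). *)
Definition m (t : R) (k : Z) (eta : R) : R :=
  exp (RInt (fun s => dtm_over_m s k eta) 0 t).

From Stdlib Require Import Reals ZArith Lra Lia Psatz.
From Coquelicot Require Import Coquelicot.
Open Scope R_scope.

(** The rate [dtm_over_m] is a supremum over [j] of Lorentzian bumps [10 / (1 + (eta/j - t)^2)]
    weighted by [<k - j>^-3]. It is bounded and Lipschitz in [t], and its time integral is at
    most the sum over [j] of the bump integrals, each at most [10 PI <k - j>^-3]; this gives (i).
    For (ii) one keeps the single term [j = k] of the supremum, and (iii) is a case analysis on
    the size of [|eta/k|] compared with [t] and with the distance [|t - eta/k|] to resonance.
    For (iv), the same summation bounds the variation of the rate in [eta] by weights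
    [|1/j| <k - j>^-3] summing to [O(1/|k|)], while the entry times into [S_t] of [(k, eta)] and
    [(k, xi)] differ only on a stretch where the rate is [O(t/|k|)]. *)

Lemma jbr_sq x : jbr x ^ 2 = 1 + x ^ 2.
Proof. unfold jbr. rewrite pow2_sqrt; nra. Qed.

Lemma jbr_ge1 x : 1 <= jbr x.
Proof. rewrite <- sqrt_1. apply sqrt_le_1_alt. nra. Qed.

Lemma Rabs_le_jbr x : Rabs x <= jbr x.
Proof.
  apply Rsqr_incr_0_var; [| pose proof (jbr_ge1 x); lra].
  rewrite <- Rsqr_abs. unfold Rsqr. pose proof (jbr_sq x). nra.
Qed.

Lemma jbrKE_sq k e : jbrKE k e ^ 2 = 1 + IZR k ^ 2 + e ^ 2.
Proof. unfold jbrKE. rewrite pow2_sqrt; nra. Qed.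

Lemma jbrKE_ge1 k e : 1 <= jbrKE k e.
Proof. rewrite <- sqrt_1. apply sqrt_le_1_alt. nra. Qed.

Lemma Rabs_le_jbrKE k e : Rabs e <= jbrKE k e.
Proof.
  apply Rsqr_incr_0_var; [| pose proof (jbrKE_ge1 k e); lra].
  rewrite <- Rsqr_abs. unfold Rsqr. pose proof (jbrKE_sq k e). nra.
Qed.

Lemma jbr_le_jbrKE k l e : jbr (IZR (l - k)) <= jbrKE (k - l) e.
Proof. apply sqrt_le_1_alt. rewrite !minus_IZR. nra. Qed.

Lemma inv_sq_pos u : 0 < / (1 + u ^ 2).
Proof. apply Rinv_0_lt_compat. nra. Qed.

Lemma inv_sq_le1 u : / (1 + u ^ 2) <= 1.
Proof. rewrite <- Rinv_1. apply Rinv_le_contravar; nra. Qed.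

Lemma inv_sq_lipschitz a b :
  Rabs (/ (1 + a ^ 2) - / (1 + b ^ 2))
    <= Rabs (a - b) * ((/ (1 + a ^ 2) + / (1 + b ^ 2)) / 2).
Proof.
  assert (Ha : 0 < 1 + a ^ 2) by nra. assert (Hb : 0 < 1 + b ^ 2) by nra.
  set (P := / (1 + a ^ 2) * / (1 + b ^ 2)).
  assert (HP : 0 <= P) by (apply Rmult_le_pos; apply Rlt_le, inv_sq_pos).
  replace (/ (1 + a ^ 2) - / (1 + b ^ 2)) with ((b - a) * (b + a) * P)
    by (unfold P; field; lra).
  replace ((/ (1 + a ^ 2) + / (1 + b ^ 2)) / 2) with ((2 + a ^ 2 + b ^ 2) / 2 * P)
    by (unfold P; field; lra).
  rewrite !Rabs_mult, (Rabs_pos_eq P HP), (Rabs_minus_sym b a), <- Rmult_assoc.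
  apply Rmult_le_compat_r; [lra|]. apply Rmult_le_compat_l; [apply Rabs_pos|].
  pose proof (pow2_ge_0 (a - 1)); pose proof (pow2_ge_0 (b - 1)).
  pose proof (pow2_ge_0 (a + 1)); pose proof (pow2_ge_0 (b + 1)).
  apply Rabs_le; split; nra.
Qed.

Lemma inv_jbr_cube_pos x : 0 < / jbr x ^ 3.
Proof. apply Rinv_0_lt_compat, pow_lt. pose proof (jbr_ge1 x). lra. Qed.

Lemma inv_jbr_cube_le x : / jbr x ^ 3 <= / (1 + x ^ 2).
Proof.
  pose proof (jbr_ge1 x). pose proof (jbr_sq x).
  apply Rinv_le_contravar; [nra|]. replace (jbr x ^ 3) with (jbr x * jbr x ^ 2) by ring. nra.
Qed.

Lemma Rabs_IZR_ge1 k : k <> 0%Z -> 1 <= Rabs (IZR k).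
Proof. intro H. rewrite <- abs_IZR. apply IZR_le. lia. Qed.

Lemma coefj_alt t k eta j :
  coefj t k eta j = 10 * / jbr (IZR (k - j)) ^ 3 * / (1 + (t - eta / IZR j) ^ 2).
Proof. unfold coefj, Rdiv. replace ((eta * / IZR j - t) ^ 2) with ((t - eta * / IZR j) ^ 2) by ring. ring. Qed.

Lemma coefj_nonneg t k eta j : 0 <= coefj t k eta j.
Proof.
  rewrite coefj_alt. pose proof (inv_jbr_cube_pos (IZR (k - j))).
  pose proof (inv_sq_pos (t - eta / IZR j)). apply Rmult_le_pos; [apply Rmult_le_pos|]; lra.
Qed.

Lemma coefj_le_inv_sq t k eta j : coefj t k eta j <= 10 * / (1 + IZR (k - j) ^ 2).
Proof.
  rewrite coefj_alt. pose proof (inv_jbr_cube_pos (IZR (k - j))).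
  pose proof (inv_jbr_cube_le (IZR (k - j))).
  pose proof (inv_sq_pos (t - eta / IZR j)). pose proof (inv_sq_le1 (t - eta / IZR j)). nra.
Qed.

Lemma coefj_le10 t k eta j : coefj t k eta j <= 10.
Proof. pose proof (coefj_le_inv_sq t k eta j). pose proof (inv_sq_le1 (IZR (k - j))). lra. Qed.

Lemma coefj_far t k eta j (N : nat) :
  (Z.of_nat N < Z.abs (k - j))%Z -> coefj t k eta j <= 10 / (1 + INR N ^ 2).
Proof.
  intro Hfar. eapply Rle_trans; [apply coefj_le_inv_sq|]. apply Rmult_le_compat_l; [lra|].
  pose proof (pos_INR N). apply Rinv_le_contravar; [nra|].
  assert (INR N <= Rabs (IZR (k - j))) by (rewrite <- abs_IZR, INR_IZR_INZ; apply IZR_le; lia).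
  rewrite <- (pow2_abs (IZR (k - j))). nra.
Qed.

Lemma coefj_lipschitz_t t s k eta j :
  Rabs (coefj t k eta j - coefj s k eta j) <= 10 * Rabs (t - s).
Proof.
  rewrite !coefj_alt. set (w := / jbr (IZR (k - j)) ^ 3).
  assert (Hw : 0 < w <= 1).
  { split; [apply inv_jbr_cube_pos|].
    eapply Rle_trans; [apply inv_jbr_cube_le | apply inv_sq_le1]. }
  set (u := t - eta / IZR j). set (v := s - eta / IZR j).
  pose proof (inv_sq_lipschitz u v) as Hl. replace (u - v) with (t - s) in Hl by (unfold u, v; ring).
  pose proof (inv_sq_le1 u). pose proof (inv_sq_le1 v). pose proof (Rabs_pos (t - s)).
  replace (10 * w * / (1 + u ^ 2) - 10 * w * / (1 + v ^ 2))
    with (10 * w * (/ (1 + u ^ 2) - / (1 + v ^ 2))) by ring.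
  rewrite Rabs_mult, (Rabs_pos_eq (10 * w)) by lra.
  apply Rle_trans with (10 * w * (Rabs (t - s) * 1)); [|nra].
  apply Rmult_le_compat_l; [lra|]. eapply Rle_trans; [exact Hl|].
  apply Rmult_le_compat_l; lra.
Qed.

Lemma coefj_lipschitz_eta s k eta xi j :
  Rabs (coefj s k eta j - coefj s k xi j)
    <= Rabs (eta - xi) / 2 * (Rabs (/ IZR j) * (coefj s k eta j + coefj s k xi j)).
Proof.
  rewrite !coefj_alt. set (w := / jbr (IZR (k - j)) ^ 3).
  pose proof (inv_jbr_cube_pos (IZR (k - j))) as Hw. fold w in Hw.
  set (u := s - eta / IZR j). set (v := s - xi / IZR j).
  pose proof (inv_sq_lipschitz u v) as Hl.
  replace (u - v) with ((xi - eta) * / IZR j) in Hl by (unfold u, v, Rdiv; ring).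
  rewrite Rabs_mult, (Rabs_minus_sym xi eta) in Hl.
  replace (10 * w * / (1 + u ^ 2) - 10 * w * / (1 + v ^ 2))
    with (10 * w * (/ (1 + u ^ 2) - / (1 + v ^ 2))) by ring.
  rewrite Rabs_mult, (Rabs_pos_eq (10 * w)) by lra.
  eapply Rle_trans; [apply Rmult_le_compat_l; [lra | exact Hl]|].
  right. unfold Rdiv. ring.
Qed.

(** The weight [|1/j| <k-j>^-3] is summable in [j] with sum [O(1/|k|)]. *)
Lemma inv_j_jbr_cube_le k j : k <> 0%Z ->
  Rabs (/ IZR j) * / jbr (IZR (k - j)) ^ 3 <= 2 / Rabs (IZR k) * / (1 + IZR (k - j) ^ 2).
Proof.
  intro Hk. pose proof (Rabs_IZR_ge1 k Hk) as HK.
  destruct (Z.eq_dec j 0) as [-> | Hj].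
  { rewrite Rinv_0, Rabs_R0, Rmult_0_l.
    apply Rmult_le_pos; [apply Rdiv_le_0_compat; lra | apply Rlt_le, inv_sq_pos]. }
  pose proof (Rabs_IZR_ge1 j Hj) as HJj.
  set (d := IZR (k - j)). set (J := jbr d).
  assert (HJ1 : 1 <= J) by apply jbr_ge1. assert (HJd : Rabs d <= J) by apply Rabs_le_jbr.
  assert (HJ2 : J ^ 2 = 1 + d ^ 2) by apply jbr_sq.
  assert (Hkj : Rabs (IZR k) <= Rabs (IZR j) + Rabs d).
  { unfold d. rewrite minus_IZR. replace (IZR k) with (IZR j + (IZR k - IZR j)) at 1 by ring.
    apply Rabs_triang. }
  rewrite Rabs_inv, <- HJ2.
  apply Rmult_le_reg_r with (Rabs (IZR j) * Rabs (IZR k) * J ^ 3); [apply Rmult_lt_0_compat; [nra | apply pow_lt; lra]|].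
  replace (/ Rabs (IZR j) * / J ^ 3 * (Rabs (IZR j) * Rabs (IZR k) * J ^ 3)) with (Rabs (IZR k)) by (field; lra).
  replace (2 / Rabs (IZR k) * / J ^ 2 * (Rabs (IZR j) * Rabs (IZR k) * J ^ 3)) with (2 * Rabs (IZR j) * J) by (field; lra).
  nra.
Qed.

Definition sum_around (F : Z -> R) (k : Z) (N : nat) : R :=
  sum_f_R0 (fun n => F (k + Z.of_nat n)%Z + F (k - Z.of_nat n)%Z) N.

Lemma sum_f_R0_ge_term (f : nat -> R) i N :
  (forall n, 0 <= f n) -> (i <= N)%nat -> f i <= sum_f_R0 f N.
Proof.
  intros Hf HiN. induction N as [|N IH]; simpl.
  - replace i with 0%nat by lia. lra.
  - destruct (Nat.eq_dec i (S N)) as [-> | Hi].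
    + pose proof (cond_pos_sum f N Hf). lra.
    + pose proof (Hf (S N)). specialize (IH ltac:(lia)). lra.
Qed.

Section SumAround.
Variable F : Z -> R.
Hypothesis F_nonneg : forall j, 0 <= F j.

Lemma sum_around_nonneg k N : 0 <= sum_around F k N.
Proof. apply cond_pos_sum. intro n. pose proof (F_nonneg (k + Z.of_nat n)). pose proof (F_nonneg (k - Z.of_nat n)). lra. Qed.

Lemma sum_around_ge k N j : (Z.abs (k - j) <= Z.of_nat N)%Z -> F j <= sum_around F k N.
Proof.
  intro Hj. set (n := Z.to_nat (Z.abs (k - j))).
  eapply Rle_trans; [| apply (sum_f_R0_ge_term _ n)].
  - destruct (Z_le_gt_dec k j).
    + replace (k + Z.of_nat n)%Z with j by (unfold n; lia). pose proof (F_nonneg (k - Z.of_nat n)). lra.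
    + replace (k - Z.of_nat n)%Z with j by (unfold n; lia). pose proof (F_nonneg (k + Z.of_nat n)). lra.
  - intro m. pose proof (F_nonneg (k + Z.of_nat m)). pose proof (F_nonneg (k - Z.of_nat m)). lra.
  - unfold n. lia.
Qed.

End SumAround.

Lemma sum_around_le F G k N : (forall j, F j <= G j) -> sum_around F k N <= sum_around G k N.
Proof. intro H. apply sum_growing. intro n. pose proof (H (k + Z.of_nat n)%Z). pose proof (H (k - Z.of_nat n)%Z). lra. Qed.

Lemma sum_around_scal F c k N : sum_around (fun j => c * F j) k N = c * sum_around F k N.
Proof. unfold sum_around. rewrite scal_sum. apply sum_eq. intros. ring. Qed.

(** Telescoping against [2/(n+1) - 2/(n+2)]. *)
Lemma sum_inv_sq_le N : sum_f_R0 (fun n => / (1 + INR n ^ 2)) N <= 3 - 2 / (INR N + 1).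
Proof.
  induction N as [|N IH]; [simpl; lra|]. rewrite tech5, S_INR.
  set (x := INR N) in *. assert (Hx : 0 <= x) by apply pos_INR.
  enough (/ (1 + (x + 1) ^ 2) <= 2 / (x + 1) - 2 / (x + 1 + 1)) by lra.
  replace (2 / (x + 1) - 2 / (x + 1 + 1)) with (2 / ((x + 1) * (x + 2))) by (field; lra).
  unfold Rdiv. apply Rmult_le_reg_l with ((1 + (x + 1) ^ 2) * ((x + 1) * (x + 2))); [nra|].
  replace ((1 + (x + 1) ^ 2) * ((x + 1) * (x + 2)) * / (1 + (x + 1) ^ 2)) with ((x + 1) * (x + 2)) by (field; nra).
  replace ((1 + (x + 1) ^ 2) * ((x + 1) * (x + 2)) * (2 * / ((x + 1) * (x + 2)))) with (2 * (1 + (x + 1) ^ 2)) by (field; nra).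
  nra.
Qed.

Lemma sum_around_inv_sq_le6 k N : sum_around (fun j => / (1 + IZR (k - j) ^ 2)) k N <= 6.
Proof.
  unfold sum_around. rewrite (sum_eq _ (fun n => / (1 + INR n ^ 2) * 2)).
  - rewrite <- scal_sum.
    pose proof (sum_inv_sq_le N). pose proof (pos_INR N).
    assert (0 < 2 / (INR N + 1)) by (apply Rdiv_lt_0_compat; lra). lra.
  - intros n _. rewrite INR_IZR_INZ.
    replace (k - (k + Z.of_nat n))%Z with (- Z.of_nat n)%Z by lia.
    replace (k - (k - Z.of_nat n))%Z with (Z.of_nat n) by lia.
    rewrite opp_IZR, <- Rsqr_pow2, <- Rsqr_neg, Rsqr_pow2. ring.
Qed.

Definition sup_nonzero (f : Z -> R) : R :=
  real (Lub_Rbar (fun x => exists j : Z, j <> 0%Z /\ x = f j)).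

Section SupNonzero.
Variables (f : Z -> R) (M : R).
Hypothesis f_le : forall j, j <> 0%Z -> f j <= M.

Lemma sup_nonzero_spec :
  (forall j, j <> 0%Z -> f j <= sup_nonzero f)
  /\ (forall B, (forall j, j <> 0%Z -> f j <= B) -> sup_nonzero f <= B).
Proof.
  set (E := fun x => exists j : Z, j <> 0%Z /\ x = f j).
  assert (HE : forall B, (forall j, j <> 0%Z -> f j <= B) -> is_ub_Rbar E B)
    by (intros B HB x [j [Hj ->]]; apply HB, Hj).
  destruct (Lub_Rbar_correct E) as [Hub Hlub]. unfold sup_nonzero. fold E.
  destruct (Lub_Rbar E) as [r| |] eqn:Hl; simpl in *.
  - split.
    + intros j Hj. apply (Hub (f j)). exists j; auto.
    + intros B HB. apply (Hlub (Finite B)), HE, HB.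
  - exfalso. apply (Hlub (Finite M)), HE, f_le.
  - exfalso. apply (Hub (f 1%Z)). exists 1%Z. split; [lia | reflexivity].
Qed.

Lemma sup_nonzero_ub j : j <> 0%Z -> f j <= sup_nonzero f.
Proof. apply sup_nonzero_spec. Qed.

End SupNonzero.

Lemma sup_nonzero_least f B : (forall j, j <> 0%Z -> f j <= B) -> sup_nonzero f <= B.
Proof. intro HB. apply (sup_nonzero_spec f B HB), HB. Qed.

Lemma sup_nonzero_dist f g M B :
  (forall j, j <> 0%Z -> f j <= M) -> (forall j, j <> 0%Z -> g j <= M) ->
  (forall j, j <> 0%Z -> Rabs (f j - g j) <= B) -> Rabs (sup_nonzero f - sup_nonzero g) <= B.
Proof.
  intros Hf Hg Hfg.
  assert (sup_nonzero f <= sup_nonzero g + B).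
  { apply sup_nonzero_least. intros j Hj. pose proof (sup_nonzero_ub g M Hg j Hj).
    pose proof (proj1 (Rabs_le_between _ _) (Hfg j Hj)). lra. }
  assert (sup_nonzero g <= sup_nonzero f + B).
  { apply sup_nonzero_least. intros j Hj. pose proof (sup_nonzero_ub f M Hf j Hj).
    pose proof (proj1 (Rabs_le_between _ _) (Hfg j Hj)). lra. }
  apply Rabs_le. lra.
Qed.

Lemma sup_nonzero_le_window f k N T : (forall j, 0 <= f j) ->
  (forall j, (Z.of_nat N < Z.abs (k - j))%Z -> f j <= T) -> sup_nonzero f <= sum_around f k N + T.
Proof.
  intros Hf Hfar.
  assert (HT : 0 <= T).
  { eapply Rle_trans; [apply (Hf (k - Z.of_nat N - 1)%Z) | apply Hfar; lia]. }
  pose proof (sum_around_nonneg f Hf k N).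
  apply sup_nonzero_least. intros j _.
  destruct (Z_le_gt_dec (Z.abs (k - j)) (Z.of_nat N)) as [Hnear | Hfar'].
  - pose proof (sum_around_ge f Hf k N j Hnear). lra.
  - pose proof (Hfar j ltac:(lia)). lra.
Qed.

Lemma supcoef_ub t k eta j : j <> 0%Z -> coefj t k eta j <= supcoef t k eta.
Proof. apply (sup_nonzero_ub _ 10). intros. apply coefj_le10. Qed.

Lemma supcoef_nonneg t k eta : 0 <= supcoef t k eta.
Proof. eapply Rle_trans; [apply (coefj_nonneg t k eta 1) | apply supcoef_ub; lia]. Qed.

Lemma supcoef_le10 t k eta : supcoef t k eta <= 10.
Proof. apply sup_nonzero_least. intros. apply coefj_le10. Qed.

Lemma supcoef_lipschitz_t t s k eta : Rabs (supcoef t k eta - supcoef s k eta) <= 10 * Rabs (t - s).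
Proof. apply (sup_nonzero_dist _ _ 10); intros; [apply coefj_le10 | apply coefj_le10 | apply coefj_lipschitz_t]. Qed.

Lemma supcoef_le_window s k eta N :
  supcoef s k eta <= sum_around (coefj s k eta) k N + 10 / (1 + INR N ^ 2).
Proof. apply sup_nonzero_le_window; [apply coefj_nonneg | intros; apply coefj_far; lia]. Qed.

Lemma continuous_of_lipschitz (f : R -> R) L x :
  (forall y z, Rabs (f y - f z) <= L * Rabs (y - z)) -> continuous f x.
Proof.
  intro Hf. apply continuity_pt_filterlim. intros eps Heps.
  pose proof (Rabs_pos L) as HL.
  exists (eps / (Rabs L + 1)). split; [apply Rdiv_lt_0_compat; lra|].
  intros y [_ Hy]. simpl in *. unfold R_dist in *.
  apply Rle_lt_trans with (Rabs L * Rabs (y - x)).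
  { eapply Rle_trans; [apply Hf | apply Rmult_le_compat_r; [apply Rabs_pos | apply RRle_abs]]. }
  apply Rle_lt_trans with (Rabs L * (eps / (Rabs L + 1))); [apply Rmult_le_compat_l; lra|].
  apply Rlt_le_trans with ((Rabs L + 1) * (eps / (Rabs L + 1))); [|right; field; lra].
  apply Rmult_lt_compat_r; [apply Rdiv_lt_0_compat|]; lra.
Qed.

Lemma ex_RInt_coefj k eta j a b : ex_RInt (fun s => coefj s k eta j) a b.
Proof.
  apply (@ex_RInt_continuous R_CompleteNormedModule). intros.
  apply continuous_of_lipschitz with 10. intros. apply coefj_lipschitz_t.
Qed.

Lemma ex_RInt_supcoef k eta a b : ex_RInt (fun s => supcoef s k eta) a b.
Proof.
  apply (@ex_RInt_continuous R_CompleteNormedModule). intros.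
  apply continuous_of_lipschitz with 10. intros. apply supcoef_lipschitz_t.
Qed.

(** [atan] is an antiderivative of [1/(1+u^2)], whose total integral is [PI]. *)
Lemma RInt_coefj_le k eta j a b : a <= b ->
  RInt (fun s => coefj s k eta j) a b <= 10 * PI * / jbr (IZR (k - j)) ^ 3.
Proof.
  intro Hab. set (w := / jbr (IZR (k - j)) ^ 3). set (c := eta / IZR j).
  assert (Hw : 0 < w) by apply inv_jbr_cube_pos.
  assert (HI : is_RInt (fun s => coefj s k eta j) a b
                 (minus (10 * w * atan (b - c)) (10 * w * atan (a - c)))).
  { apply (@is_RInt_derive R_CompleteNormedModule (fun s => 10 * w * atan (s - c))).
    - intros x _. rewrite coefj_alt. fold w c. apply is_derive_Reals.
      replace (10 * w * / (1 + (x - c) ^ 2)) with (10 * w * (/ (1 + (x - c) ^ 2) * (1 - 0))) by ring.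
      apply derivable_pt_lim_scal, (derivable_pt_lim_comp (fun s => s - c) atan).
      + apply derivable_pt_lim_minus; [apply derivable_pt_lim_id | apply derivable_pt_lim_const].
      + apply derivable_pt_lim_atan.
    - intros. apply continuous_of_lipschitz with 10. intros. apply coefj_lipschitz_t. }
  rewrite (is_RInt_unique _ _ _ _ HI). unfold minus, plus, opp; simpl.
  pose proof (atan_bound (b - c)). pose proof (atan_bound (a - c)). nra.
Qed.

Lemma is_RInt_sum_f_R0 (G : nat -> R -> R) (I : nat -> R) N a b :
  (forall n, is_RInt (G n) a b (I n)) ->
  is_RInt (fun s => sum_f_R0 (fun n => G n s) N) a b (sum_f_R0 I N).
Proof.
  intro HG. induction N as [|N IH]; simpl; [apply HG|].
  apply (@is_RInt_plus R_NormedModule); [exact IH | apply HG].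
Qed.

Lemma is_RInt_sum_around (F : Z -> R -> R) (I : Z -> R) k N a b :
  (forall j, is_RInt (F j) a b (I j)) ->
  is_RInt (fun s => sum_around (fun j => F j s) k N) a b (sum_around I k N).
Proof.
  intro HF. apply (is_RInt_sum_f_R0 (fun n s => F (k + Z.of_nat n)%Z s + F (k - Z.of_nat n)%Z s)).
  intro n. apply (@is_RInt_plus R_NormedModule); apply HF.
Qed.

Lemma is_RInt_le_window (f : R -> R) (F : Z -> R -> R) (I : Z -> R) If k N T a b : a <= b ->
  is_RInt f a b If -> (forall j, is_RInt (F j) a b (I j)) ->
  (forall s, a < s < b -> f s <= sum_around (fun j => F j s) k N + T) ->
  If <= sum_around I k N + (b - a) * T.
Proof.
  intros Hab Hf HF Hle. eapply is_RInt_le; [exact Hab | exact Hf | | exact Hle].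
  apply (@is_RInt_plus R_NormedModule); [apply is_RInt_sum_around, HF | apply (@is_RInt_const R_NormedModule)].
Qed.

Lemma le_of_forall_le_plus_inv_sq X A c :
  (forall N : nat, X <= A + c / (1 + INR N ^ 2)) -> X <= A.
Proof.
  intro H. apply Rnot_lt_le. intro HAX.
  destruct (INR_unbounded (Rabs c / (X - A))) as [N HN]. specialize (H N).
  set (y := INR N) in *. pose proof (pos_INR N). fold y in H0.
  assert (Hc : Rabs c < y * (X - A)).
  { apply Rmult_lt_compat_r with (r := X - A) in HN; [|lra].
    unfold Rdiv in HN. rewrite Rmult_assoc, Rinv_l in HN by lra. lra. }
  assert (c / (1 + y ^ 2) < X - A); [|lra].
  apply Rmult_lt_reg_r with (1 + y ^ 2); [nra|]. unfold Rdiv.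
  rewrite Rmult_assoc, Rinv_l by nra. pose proof (Rle_abs c).
  assert (y <= 1 + y ^ 2) by nra. nra.
Qed.

Lemma RInt_supcoef_le k eta a t : a <= t -> RInt (fun s => supcoef s k eta) a t <= 60 * PI.
Proof.
  intro Hat. apply le_of_forall_le_plus_inv_sq with (c := (t - a) * 10). intro N.
  eapply Rle_trans.
  - apply (is_RInt_le_window (fun s => supcoef s k eta) (fun j s => coefj s k eta j)
             (fun j => RInt (fun s => coefj s k eta j) a t) _ k N (10 / (1 + INR N ^ 2))); [exact Hat | exact (RInt_correct _ _ _ (ex_RInt_supcoef k eta a t)) | |].
    + intro j. exact (RInt_correct _ _ _ (ex_RInt_coefj k eta j a t)).
    + intros s _. apply supcoef_le_window.
  - assert (sum_around (fun j => RInt (fun s => coefj s k eta j) a t) k N <= 60 * PI).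
    { eapply Rle_trans; [apply (sum_around_le _ (fun j => 10 * PI * / (1 + IZR (k - j) ^ 2)))|].
      - intro j. eapply Rle_trans; [apply RInt_coefj_le, Hat|].
        pose proof PI_RGT_0. apply Rmult_le_compat_l; [lra | apply inv_jbr_cube_le].
      - rewrite sum_around_scal. pose proof (sum_around_inv_sq_le6 k N). pose proof PI_RGT_0. nra. }
    unfold Rdiv. lra.
Qed.

Lemma RInt_supcoef_nonneg k eta a t : a <= t -> 0 <= RInt (fun s => supcoef s k eta) a t.
Proof. intro. apply RInt_ge_0; [easy | apply ex_RInt_supcoef | intros; apply supcoef_nonneg]. Qed.

(** [(k, eta)] belongs to [S_s] exactly when [s >= entry_time k eta]. *)
Definition entry_time (k : Z) (eta : R) : R := sqrt (absKE k eta / 10).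

Lemma absKE_nonneg k eta : 0 <= absKE k eta.
Proof. unfold absKE. pose proof (Rabs_pos (IZR k)). pose proof (Rabs_pos eta). lra. Qed.

Lemma entry_time_sq k eta : entry_time k eta ^ 2 = absKE k eta / 10.
Proof. unfold entry_time. rewrite pow2_sqrt; [easy|]. pose proof (absKE_nonneg k eta). lra. Qed.

Lemma dtm_over_m_before_entry s k eta : 0 <= s < entry_time k eta -> dtm_over_m s k eta = 0.
Proof.
  intros Hs. unfold dtm_over_m. destruct Rle_dec as [H|H]; [|easy].
  pose proof (entry_time_sq k eta). pose proof (sqrt_pos (absKE k eta / 10)). fold (entry_time k eta) in H1.
  nra.
Qed.

Lemma dtm_over_m_after_entry s k eta : entry_time k eta <= s -> dtm_over_m s k eta = supcoef s k eta.
Proof.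
  intros Hs. unfold dtm_over_m. destruct Rle_dec as [H|H]; [easy|].
  pose proof (entry_time_sq k eta). pose proof (sqrt_pos (absKE k eta / 10)). fold (entry_time k eta) in H1.
  exfalso. apply H. nra.
Qed.

Lemma RInt_dtm_over_m t k eta : 0 <= t ->
  RInt (fun s => dtm_over_m s k eta) 0 t = RInt (fun s => supcoef s k eta) (Rmin (entry_time k eta) t) t.
Proof.
  intro Ht. set (a := Rmin (entry_time k eta) t).
  assert (Ha : 0 <= a <= t).
  { split; [apply Rmin_glb; [apply sqrt_pos | easy] | apply Rmin_r]. }
  assert (E1 : forall x, Rmin 0 a < x < Rmax 0 a -> dtm_over_m x k eta = 0).
  { intros x Hx. rewrite Rmin_left, Rmax_right in Hx by lra. apply dtm_over_m_before_entry.
    pose proof (Rmin_l (entry_time k eta) t). fold a in H. lra. }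
  assert (E2 : forall x, Rmin a t < x < Rmax a t -> supcoef x k eta = dtm_over_m x k eta).
  { intros x Hx. rewrite Rmin_left, Rmax_right in Hx by lra. symmetry. apply dtm_over_m_after_entry.
    unfold a in Hx. destruct (Rle_dec (entry_time k eta) t).
    - rewrite Rmin_left in Hx; lra.
    - rewrite Rmin_right in Hx; lra. }
  assert (I1 : is_RInt (fun s => dtm_over_m s k eta) 0 a (scal (a - 0) 0)).
  { eapply is_RInt_ext; [intros x Hx; symmetry; apply E1, Hx | apply (@is_RInt_const R_NormedModule)]. }
  assert (I2 : is_RInt (fun s => dtm_over_m s k eta) a t (RInt (fun s => supcoef s k eta) a t)).
  { eapply is_RInt_ext; [exact E2 | exact (RInt_correct _ _ _ (ex_RInt_supcoef k eta a t))]. }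
  rewrite (is_RInt_unique _ _ _ _ (is_RInt_Chasles _ _ _ _ _ _ I1 I2)).
  unfold plus, scal; simpl. unfold mult; simpl. ring.
Qed.

Lemma exp_le_compat x y : x <= y -> exp x <= exp y.
Proof. intros [H | ->]; [apply Rlt_le, exp_increasing, H | apply Rle_refl]. Qed.

Lemma m_bounds t k eta : 0 <= t -> 1 <= m t k eta <= exp (60 * PI).
Proof.
  intro Ht. unfold m. rewrite RInt_dtm_over_m by exact Ht.
  pose proof (Rmin_r (entry_time k eta) t) as Ha.
  pose proof (RInt_supcoef_nonneg k eta _ _ Ha). pose proof (RInt_supcoef_le k eta _ _ Ha).
  split; [rewrite <- exp_0 | ]; apply exp_le_compat; lra.
Qed.

Lemma Rdiv_le_cross a b c d : 0 < b -> 0 < d -> a * d <= c * b -> a / b <= c / d.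
Proof.
  intros Hb Hd H. apply Rmult_le_reg_r with (b * d); [nra|].
  replace (a / b * (b * d)) with (a * d) by (field; lra).
  replace (c / d * (b * d)) with (c * b) by (field; lra). exact H.
Qed.

Lemma dtm_over_m_inS t l xi : inS t l xi -> dtm_over_m t l xi = supcoef t l xi.
Proof. intro H. unfold dtm_over_m. destruct Rle_dec; [easy | contradiction]. Qed.

(** The sup defining [dtm_over_m t l xi] is bounded below by its term [j = k]. *)
Lemma sqrt_dtm_over_m_ge t k eta l xi : inS t l xi -> k <> 0%Z ->
  1 / ((1 + Rabs (t - eta / IZR k)) * jbrKE (k - l) (eta - xi) ^ 3) <= sqrt (dtm_over_m t l xi).
Proof.
  intros HS Hk. set (x := Rabs (t - eta / IZR k)). set (D := jbrKE (k - l) (eta - xi)).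
  assert (HD : 1 <= D) by apply jbrKE_ge1. assert (Hx : 0 <= x) by apply Rabs_pos.
  assert (Hk0 : IZR k <> 0) by (apply not_0_IZR, Hk).
  assert (Hc : coefj t l xi k <= dtm_over_m t l xi)
    by (rewrite dtm_over_m_inS by exact HS; apply supcoef_ub, Hk).
  rewrite coefj_alt in Hc. set (J := jbr (IZR (l - k))) in Hc.
  assert (HJ : 1 <= J <= D) by (split; [apply jbr_ge1 | apply jbr_le_jbrKE]).
  set (u := t - xi / IZR k) in Hc.
  assert (Hu : Rabs u <= x + D).
  { replace u with ((t - eta / IZR k) + (eta - xi) / IZR k) by (unfold u; field; exact Hk0).
    eapply Rle_trans; [apply Rabs_triang | apply Rplus_le_compat_l].
    rewrite Rabs_div by exact Hk0. eapply Rle_trans; [| apply Rabs_le_jbrKE].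
    pose proof (Rabs_IZR_ge1 k Hk). pose proof (Rabs_pos (eta - xi)).
    apply Rmult_le_reg_r with (Rabs (IZR k)); [lra|]. unfold Rdiv.
    rewrite Rmult_assoc, Rinv_l by lra. nra. }
  assert (Hu2 : 1 + u ^ 2 <= 2 * (1 + x) ^ 2 * D ^ 2).
  { assert (x + D <= (1 + x) * D) by nra.
    assert (Rabs u ^ 2 <= ((1 + x) * D) ^ 2) by (apply pow_incr; pose proof (Rabs_pos u); lra).
    assert (1 <= ((1 + x) * D) ^ 2) by (rewrite <- (pow1 2); apply pow_incr; nra).
    rewrite <- (pow2_abs u). rewrite Rpow_mult_distr in *. lra. }
  set (y := 1 / ((1 + x) * D ^ 3)).
  assert (Hy : 0 < y) by (apply Rdiv_lt_0_compat; [lra | apply Rmult_lt_0_compat; [lra | apply pow_lt; lra]]).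
  rewrite <- (sqrt_pow2 y) by lra. apply sqrt_le_1_alt. eapply Rle_trans; [| exact Hc].
  unfold y. replace ((1 / ((1 + x) * D ^ 3)) ^ 2) with (1 / ((1 + x) ^ 2 * D ^ 6)) by (field; lra).
  replace (10 * / J ^ 3 * / (1 + u ^ 2)) with (10 / (J ^ 3 * (1 + u ^ 2))) by (field; nra).
  apply Rdiv_le_cross; [apply Rmult_lt_0_compat; [nra | apply pow_lt; lra] | apply Rmult_lt_0_compat; [apply pow_lt; lra | nra]|].
  assert (HJ3 : J ^ 3 <= D ^ 3) by (apply pow_incr; lra).
  assert (J ^ 3 * (1 + u ^ 2) <= D ^ 3 * (2 * (1 + x) ^ 2 * D ^ 2)) by (apply Rmult_le_compat; nra).
  assert (0 <= (1 + x) ^ 2 * D ^ 5) by (apply Rmult_le_pos; [nra | apply pow_le; lra]).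
  replace (D ^ 6) with (D ^ 5 * D) by ring. nra.
Qed.

(** The two cases of (iii) where no information on [dtm_over_m] is needed:
    a bounded ratio [(1+|eta/k|)/|k|], or [|eta/k|] within twice the distance to resonance. *)
Lemma resonance_bound_easy K x y : 1 <= K -> 0 <= x -> 0 <= y -> ((1 + y) / K <= 3 \/ y <= 2 * x) ->
  (1 + y) / K * (1 / (1 + x ^ 2)) <= 6 / (1 + x).
Proof.
  intros HK Hx Hy Hcase.
  assert (HB : (1 + y) / K <= 1 + y).
  { apply Rmult_le_reg_r with K; [lra|]. unfold Rdiv. rewrite Rmult_assoc, Rinv_l by lra. nra. }
  assert (HB0 : 0 <= (1 + y) / K) by (apply Rdiv_le_0_compat; lra).
  assert (Hbound : (1 + y) / K * (1 + x) <= 6 * (1 + x ^ 2)) by (destruct Hcase; nra).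
  replace ((1 + y) / K * (1 / (1 + x ^ 2))) with ((1 + y) / K / (1 + x ^ 2)) by (field; nra).
  apply Rdiv_le_cross; nra.
Qed.

(** Near resonance and inside [S_t]: the lower bound on [dtm_over_m] pays for the ratio. *)
Lemma resonance_bound_inside K x y st sA D q : 1 <= K -> 0 <= x -> 1 <= st ->
  2 * st ^ 2 < 3 * y -> 1 + y <= 3 * st ^ 2 -> y / K ^ 2 <= sA ^ 2 -> 1 <= sA -> 1 <= D ->
  st * (1 / ((1 + x) * D ^ 3)) <= q ->
  (1 + y) / K * (1 / (1 + x ^ 2)) <= 8 * (sA / (1 + x) * (1 + q) * D ^ 5).
Proof.
  intros HK Hx Hst Hy3 Hy2 HsA HsA1 HD Hq. set (P := / (1 + x)).
  assert (HP : 0 < P) by (apply Rinv_0_lt_compat; lra).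
  assert (HP1 : P * (1 + x) = 1) by (unfold P; field; lra).
  assert (HQ : 1 / (1 + x ^ 2) <= 2 * P ^ 2).
  { apply Rmult_le_reg_r with ((1 + x ^ 2) * (1 + x) ^ 2); [nra|].
    replace (1 / (1 + x ^ 2) * ((1 + x ^ 2) * (1 + x) ^ 2)) with ((1 + x) ^ 2) by (field; nra).
    replace (2 * P ^ 2 * ((1 + x ^ 2) * (1 + x) ^ 2)) with (2 * (1 + x ^ 2) * (P * (1 + x)) ^ 2) by ring.
    rewrite HP1. pose proof (pow2_ge_0 (x - 1)). nra. }
  assert (Hratio : (1 + y) / K <= 4 * st * sA).
  { apply Rle_trans with (3 * st ^ 2 / K); [apply Rmult_le_compat_r; [apply Rlt_le, Rinv_0_lt_compat; lra | exact Hy2]|].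
    apply Rsqr_incr_0_var; [| nra]. unfold Rsqr.
    apply Rle_trans with (16 * st ^ 2 * (y / K ^ 2)); [| nra].
    replace (3 * st ^ 2 / K * (3 * st ^ 2 / K)) with (9 * st ^ 2 * st ^ 2 / K ^ 2) by (field; lra).
    replace (16 * st ^ 2 * (y / K ^ 2)) with (16 * st ^ 2 * y / K ^ 2) by (field; lra).
    apply Rmult_le_compat_r; [apply Rlt_le, Rinv_0_lt_compat; nra | nra]. }
  assert (HqD : st * P ^ 2 <= P * q * D ^ 3).
  { replace (1 / ((1 + x) * D ^ 3)) with (P / D ^ 3) in Hq by (unfold P; field; lra).
    assert (0 < D ^ 3) by (apply pow_lt; lra).
    apply Rmult_le_compat_r with (r := P * D ^ 3) in Hq; [|nra].
    replace (st * (P / D ^ 3) * (P * D ^ 3)) with (st * P ^ 2) in Hq by (field; lra). nra. }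
  assert (0 <= (1 + y) / K) by (apply Rdiv_le_0_compat; nra).
  assert (0 <= q) by (pose proof (Rmult_le_pos st (1 / ((1 + x) * D ^ 3)) ltac:(lra) ltac:(apply Rlt_le, Rdiv_lt_0_compat; [lra | apply Rmult_lt_0_compat; [lra | apply pow_lt; lra]])); lra).
  assert (HD3 : D ^ 3 <= D ^ 5) by (apply Rle_pow; [lra | lia]).
  apply Rle_trans with (8 * sA * (st * P ^ 2)); [nra|].
  replace (sA / (1 + x)) with (sA * P) by reflexivity.
  apply Rle_trans with (8 * sA * (P * q * D ^ 3)); [apply Rmult_le_compat_l; nra|].
  assert (P * q * D ^ 3 <= P * (1 + q) * D ^ 5).
  { apply Rmult_le_compat; [nra | apply pow_le; lra | apply Rmult_le_compat_l; lra | exact HD3]. }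
  replace (8 * (sA * P * (1 + q) * D ^ 5)) with (8 * sA * (P * (1 + q) * D ^ 5)) by ring.
  apply Rmult_le_compat_l; lra.
Qed.

(** Near resonance and outside [S_t]: then [(l, xi)] is far from [(k, eta)]. *)
Lemma resonance_bound_outside K x y t D : 1 <= t -> 0 <= x -> 1 <= K -> 1 + x <= 2 * t ->
  1 + y <= 3 * t -> 24 * t ^ 4 <= D ^ 2 ->
  (1 + y) / K * (1 / (1 + x ^ 2)) <= 8 * (D ^ 2 / (1 + x)).
Proof.
  intros Ht Hx HK Hx2 Hy HD.
  assert (HL : (1 + y) / K * (1 / (1 + x ^ 2)) <= 3 * t).
  { assert (0 < 1 / (1 + x ^ 2) <= 1) by (split; [apply Rdiv_lt_0_compat | apply Rmult_le_reg_r with (1 + x ^ 2); [| unfold Rdiv; rewrite Rmult_assoc, Rinv_l]]; nra).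
    assert ((1 + y) / K <= 3 * t).
    { apply Rmult_le_reg_r with K; [lra|]. unfold Rdiv. rewrite Rmult_assoc, Rinv_l by lra. nra. }
    assert (0 <= (1 + y) / K \/ (1 + y) / K < 0) as [|] by lra; nra. }
  eapply Rle_trans; [exact HL|]. unfold Rdiv.
  apply Rle_trans with (8 * (24 * t ^ 4 * / (2 * t))).
  - replace (8 * (24 * t ^ 4 * / (2 * t))) with (96 * t ^ 3) by (field; lra).
    assert (1 <= t ^ 2) by nra. nra.
  - apply Rmult_le_compat_l; [lra|]. apply Rmult_le_compat; [nra | apply Rlt_le, Rinv_0_lt_compat; lra | exact HD |].
    apply Rinv_le_contravar; lra.
Qed.

Lemma jbrKE_sq_ge_outside t k eta l xi : absKE k eta <= 3 * t ^ 2 -> 10 * t ^ 2 < absKE l xi ->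
  24 * t ^ 4 <= jbrKE (k - l) (eta - xi) ^ 2.
Proof.
  intros Hk Hl. rewrite jbrKE_sq.
  assert (7 * t ^ 2 <= Rabs (IZR (k - l)) + Rabs (eta - xi)).
  { unfold absKE in *. rewrite minus_IZR.
    pose proof (Rabs_triang_inv (IZR l) (IZR k)). pose proof (Rabs_triang_inv xi eta).
    rewrite (Rabs_minus_sym (IZR k)), (Rabs_minus_sym eta). lra. }
  rewrite <- (pow2_abs (IZR (k - l))), <- (pow2_abs (eta - xi)).
  set (a := Rabs (IZR (k - l))) in *. set (b := Rabs (eta - xi)) in *.
  assert (49 * t ^ 4 <= (a + b) ^ 2).
  { replace (49 * t ^ 4) with ((7 * t ^ 2) ^ 2) by ring. apply pow_incr. split; [nra | easy]. }
  pose proof (pow2_ge_0 (a - b)). nra.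
Qed.

Lemma Rabs_eta_scale k eta : k <> 0%Z -> Rabs eta = Rabs (eta / IZR k) * Rabs (IZR k).
Proof. intro Hk. rewrite Rabs_div by (apply not_0_IZR, Hk). field. apply Rabs_no_R0, not_0_IZR, Hk. Qed.

Lemma absKE_div_sq k eta : k <> 0%Z ->
  absKE k eta / IZR k ^ 2 = (1 + Rabs (eta / IZR k)) / Rabs (IZR k).
Proof.
  intro Hk. pose proof (Rabs_IZR_ge1 k Hk).
  unfold absKE. rewrite (Rabs_eta_scale k eta Hk), <- (pow2_abs (IZR k)). field. lra.
Qed.

Lemma Rabs_div_sq_le_sqrt_jbr k eta : k <> 0%Z ->
  Rabs (eta / IZR k) / Rabs (IZR k) ^ 2 <= sqrt (jbr (eta / IZR k ^ 3)) ^ 2.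
Proof.
  intro Hk. pose proof (Rabs_IZR_ge1 k Hk). assert (Hk0 : IZR k <> 0) by (apply not_0_IZR, Hk).
  rewrite pow2_sqrt by (pose proof (jbr_ge1 (eta / IZR k ^ 3)); lra).
  eapply Rle_trans; [| apply Rabs_le_jbr].
  rewrite !Rabs_div, <- RPow_abs by (try apply pow_nonzero; exact Hk0). right. field. lra.
Qed.

Lemma part_iii_bound t k eta l xi : 1 <= t -> k <> 0%Z ->
  absKE k eta / IZR k ^ 2 * (1 / (1 + Rabs (t - eta / IZR k) ^ 2))
    <= 8 * (sqrt (jbr (eta / IZR k ^ 3)) / (1 + Rabs (t - eta / IZR k))
            * (1 + sqrt t * sqrt (dtm_over_m t l xi)) * jbrKE (k - l) (eta - xi) ^ 5
            + 1 / jbr t ^ 2).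
Proof.
  intros Ht Hk. rewrite absKE_div_sq by exact Hk.
  pose proof (Rabs_div_sq_le_sqrt_jbr k eta Hk) as HsA2. pose proof (Rabs_eta_scale k eta Hk) as HyK.
  pose proof (Rabs_IZR_ge1 k Hk) as HK. set (K := Rabs (IZR k)) in *.
  set (z := eta / IZR k) in *. set (x := Rabs (t - z)). set (y := Rabs z) in *.
  assert (Hx : 0 <= x) by apply Rabs_pos. assert (Hy : 0 <= y) by apply Rabs_pos.
  set (sA := sqrt (jbr (eta / IZR k ^ 3))) in *.
  assert (HsA1 : 1 <= sA) by (rewrite <- sqrt_1; apply sqrt_le_1_alt, jbr_ge1).
  set (D := jbrKE (k - l) (eta - xi)). assert (HD : 1 <= D) by apply jbrKE_ge1.
  set (st := sqrt t). assert (Hst : st ^ 2 = t) by (apply pow2_sqrt; lra).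
  assert (Hst1 : 1 <= st) by (rewrite <- sqrt_1; apply sqrt_le_1_alt, Ht).
  set (q := st * sqrt (dtm_over_m t l xi)).
  assert (Hq : 0 <= q) by (apply Rmult_le_pos; [lra | apply sqrt_pos]).
  set (T := sA / (1 + x) * (1 + q) * D ^ 5).
  enough ((1 + y) / K * (1 / (1 + x ^ 2)) <= 8 * T).
  { assert (0 <= 1 / jbr t ^ 2) by (apply Rdiv_le_0_compat; [lra | apply pow_lt; pose proof (jbr_ge1 t); lra]). lra. }
  assert (HD25 : D ^ 2 <= D ^ 5) by (apply Rle_pow; [lra | lia]).
  assert (HD2 : 1 <= D ^ 2) by (rewrite <- (pow1 2); apply pow_incr; lra).
  assert (HT : D ^ 2 / (1 + x) <= T).
  { unfold T, Rdiv. assert (0 < / (1 + x)) by (apply Rinv_0_lt_compat; lra).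
    apply Rle_trans with (1 * / (1 + x) * 1 * D ^ 5); [nra|].
    apply Rmult_le_compat_r; [lra|]. apply Rmult_le_compat; nra. }
  destruct (Rle_dec ((1 + y) / K) 3) as [C1 | C1];
    [| destruct (Rle_dec y (2 * x)) as [C2 | C2]].
  1, 2: eapply Rle_trans; [apply resonance_bound_easy; try lra; tauto |];
    assert (1 / (1 + x) <= D ^ 2 / (1 + x)) by (apply Rmult_le_compat_r; [apply Rlt_le, Rinv_0_lt_compat |]; lra);
    assert (0 < / (1 + x)) by (apply Rinv_0_lt_compat; lra);
    unfold Rdiv in *; lra.
  assert (Hty : Rabs (t - y) <= x).
  { unfold x, y. rewrite <- (Rabs_pos_eq t) at 1 by lra. apply Rabs_triang_inv2. }
  apply Rabs_le_between in Hty.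
  assert (HKt : K < t).
  { apply Rnot_le_lt in C1. apply Rmult_lt_compat_r with (r := K) in C1; [|lra].
    unfold Rdiv in C1. rewrite Rmult_assoc, Rinv_l in C1 by lra. lra. }
  destruct (Rle_dec (absKE l xi) (10 * t ^ 2)) as [Hin | Hout].
  - apply resonance_bound_inside with (st := st); try lra.
    apply Rmult_le_compat_l; [lra | apply sqrt_dtm_over_m_ge; [exact Hin | exact Hk]].
  - eapply Rle_trans; [apply resonance_bound_outside with (t := t) (D := D); try lra|].
    + apply jbrKE_sq_ge_outside; [| lra].
      unfold absKE. fold K. rewrite HyK. nra.
    + lra.
Qed.

(** Before resonance, either [|j| >= |k|/2] and the time factor is small, or [|k - j| > |k|/2]. *)
Lemma coefj_le_before_resonance s k eta j : 0 < s -> 1 <= Rabs (IZR k) ->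
  4 * Rabs eta <= Rabs (IZR k) * s -> coefj s k eta j <= Rmax (40 / s ^ 2) (40 / Rabs (IZR k) ^ 2).
Proof.
  intros Hs HK Heta. set (K := Rabs (IZR k)) in *. rewrite coefj_alt.
  set (w := / jbr (IZR (k - j)) ^ 3). set (g := / (1 + (s - eta / IZR j) ^ 2)).
  assert (Hw : 0 < w <= / (1 + IZR (k - j) ^ 2)) by (split; [apply inv_jbr_cube_pos | apply inv_jbr_cube_le]).
  pose proof (inv_sq_le1 (IZR (k - j))). assert (Hg : 0 < g <= 1) by (split; [apply inv_sq_pos | apply inv_sq_le1]).
  destruct (Rle_dec (K / 2) (Rabs (IZR j))) as [Hj | Hj].
  - apply Rle_trans with (40 / s ^ 2); [| apply Rmax_l].
    assert (HJ0 : IZR j <> 0) by (intro E; rewrite E, Rabs_R0 in Hj; lra).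
    assert (Hq : Rabs (eta / IZR j) <= s / 2).
    { rewrite Rabs_div by exact HJ0. apply Rmult_le_reg_r with (Rabs (IZR j)); [lra|].
      unfold Rdiv. rewrite Rmult_assoc, Rinv_l by lra. nra. }
    assert (Hu : s / 2 <= Rabs (s - eta / IZR j)).
    { pose proof (Rabs_triang_inv s (eta / IZR j)). rewrite (Rabs_pos_eq s) in H0 by lra. lra. }
    assert (g <= 4 / s ^ 2).
    { unfold g. replace (4 / s ^ 2) with (/ (s ^ 2 / 4)) by (field; lra).
      apply Rinv_le_contravar; [nra|]. rewrite <- (pow2_abs (s - eta / IZR j)). nra. }
    replace (40 / s ^ 2) with (10 * 1 * (4 / s ^ 2)) by (field; lra). apply Rmult_le_compat; nra.
  - apply Rle_trans with (40 / K ^ 2); [| apply Rmax_r].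
    assert (Hd : K / 2 < Rabs (IZR (k - j))).
    { rewrite minus_IZR. pose proof (Rabs_triang_inv (IZR k) (IZR j)). fold K in H0. lra. }
    assert (w <= 4 / K ^ 2).
    { eapply Rle_trans; [apply Hw|]. replace (4 / K ^ 2) with (/ (K ^ 2 / 4)) by (field; lra).
      apply Rinv_le_contravar; [nra|]. rewrite <- (pow2_abs (IZR (k - j))). nra. }
    replace (40 / K ^ 2) with (10 * (4 / K ^ 2) * 1) by (field; lra). apply Rmult_le_compat; nra.
Qed.

Lemma supcoef_le_inS s k eta : k <> 0%Z -> 0 <= s -> inS s k eta ->
  supcoef s k eta <= 2000 * s / Rabs (IZR k).
Proof.
  intros Hk Hs HS. pose proof (Rabs_IZR_ge1 k Hk) as HK. set (K := Rabs (IZR k)) in *.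
  unfold inS, absKE in HS. fold K in HS. pose proof (Rabs_pos eta).
  assert (Hs3 : 3 / 10 <= s) by nra.
  apply Rmult_le_reg_r with K; [lra|]. unfold Rdiv. rewrite Rmult_assoc, Rinv_l, Rmult_1_r by lra.
  destruct (Rle_dec (K / 40) s).
  - pose proof (supcoef_le10 s k eta). nra.
  - assert (supcoef s k eta <= Rmax (40 / s ^ 2) (40 / K ^ 2)).
    { apply sup_nonzero_least. intros j _. apply coefj_le_before_resonance; fold K; nra. }
    apply Rle_trans with (Rmax (40 / s ^ 2) (40 / K ^ 2) * K); [apply Rmult_le_compat_r; lra|].
    apply Rmax_case.
    + replace (40 / s ^ 2 * K) with (40 * K / s ^ 2) by (field; lra).
      apply Rmult_le_reg_r with (s ^ 2); [nra|]. unfold Rdiv. rewrite Rmult_assoc, Rinv_l by nra. nra.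
    + replace (40 / K ^ 2 * K) with (40 / K) by (field; lra).
      apply Rmult_le_reg_r with K; [lra|]. unfold Rdiv. rewrite Rmult_assoc, Rinv_l by lra. nra.
Qed.

Lemma RInt_supcoef_le_after_entry k eta a b : k <> 0%Z -> 0 <= a <= b -> inS a k eta ->
  RInt (fun s => supcoef s k eta) a b <= 1000 * (b ^ 2 - a ^ 2) / Rabs (IZR k).
Proof.
  intros Hk [Ha Hab] HS. pose proof (Rabs_IZR_ge1 k Hk) as HK. set (K := Rabs (IZR k)) in *.
  assert (HI : is_RInt (fun s => 2000 * s / K) a b (minus (1000 * b ^ 2 / K) (1000 * a ^ 2 / K))).
  { apply (@is_RInt_derive R_CompleteNormedModule (fun s => 1000 * s ^ 2 / K)).
    - intros x _. auto_derive; [easy | field; lra].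
    - intros x _. apply (continuous_of_lipschitz _ (2000 / K)). intros y z.
      replace (2000 * y / K - 2000 * z / K) with (2000 / K * (y - z)) by (field; lra).
      rewrite Rabs_mult, (Rabs_pos_eq (2000 / K)) by (apply Rdiv_le_0_compat; lra). lra. }
  replace (1000 * (b ^ 2 - a ^ 2) / K) with (minus (1000 * b ^ 2 / K) (1000 * a ^ 2 / K))
    by (unfold minus, plus, opp; simpl; field; lra).
  eapply is_RInt_le; [exact Hab | exact (RInt_correct _ _ _ (ex_RInt_supcoef k eta a b)) | exact HI |].
  intros s Hs'. apply supcoef_le_inS; [exact Hk | lra |]. unfold inS in *. nra.
Qed.

Lemma supcoef_dist_eta s k eta xi N :
  Rabs (supcoef s k eta - supcoef s k xi)
    <= sum_around (fun j => Rabs (eta - xi) / 2 * (Rabs (/ IZR j) * (coefj s k eta j + coefj s k xi j))) k N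
       + 20 / (1 + INR N ^ 2).
Proof.
  set (F := fun j => Rabs (eta - xi) / 2 * (Rabs (/ IZR j) * (coefj s k eta j + coefj s k xi j))).
  assert (HF : forall j, 0 <= F j).
  { intro j. pose proof (coefj_nonneg s k eta j). pose proof (coefj_nonneg s k xi j).
    pose proof (Rabs_pos (eta - xi)). pose proof (Rabs_pos (/ IZR j)). unfold F.
    apply Rmult_le_pos; [lra | apply Rmult_le_pos; lra]. }
  pose proof (sum_around_nonneg F HF k N).
  assert (HT : 0 <= 20 / (1 + INR N ^ 2)) by (apply Rdiv_le_0_compat; [lra | pose proof (pos_INR N); nra]).
  apply (sup_nonzero_dist _ _ 10); intros j _; [apply coefj_le10 | apply coefj_le10 |].
  destruct (Z_le_gt_dec (Z.abs (k - j)) (Z.of_nat N)) as [Hnear | Hfar].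
  - pose proof (coefj_lipschitz_eta s k eta xi j). pose proof (sum_around_ge F HF k N j Hnear).
    unfold F in *. lra.
  - pose proof (coefj_far s k eta j N ltac:(lia)). pose proof (coefj_far s k xi j N ltac:(lia)).
    pose proof (coefj_nonneg s k eta j). pose proof (coefj_nonneg s k xi j).
    apply Rabs_le. unfold Rdiv in *. lra.
Qed.

Lemma RInt_supcoef_dist_eta k eta xi b t : k <> 0%Z -> b <= t ->
  Rabs (RInt (fun s => supcoef s k eta) b t - RInt (fun s => supcoef s k xi) b t)
    <= 120 * PI * Rabs (eta - xi) / Rabs (IZR k).
Proof.
  intros Hk Hbt. pose proof (Rabs_IZR_ge1 k Hk) as HK. pose proof PI_RGT_0.
  assert (one_side : forall e1 e2,
    RInt (fun s => supcoef s k e1) b t - RInt (fun s => supcoef s k e2) b t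
      <= 120 * PI * Rabs (e1 - e2) / Rabs (IZR k)).
  { intros e1 e2. set (c := Rabs (e1 - e2) / 2). assert (Hc : 0 <= c) by (pose proof (Rabs_pos (e1 - e2)); unfold c; lra).
    set (R1 := fun j => RInt (fun s => coefj s k e1 j) b t). set (R2 := fun j => RInt (fun s => coefj s k e2 j) b t).
    apply le_of_forall_le_plus_inv_sq with (c := (t - b) * 20). intro N.
    eapply Rle_trans.
    - apply (is_RInt_le_window (fun s => supcoef s k e1 - supcoef s k e2)
               (fun j s => c * (Rabs (/ IZR j) * (coefj s k e1 j + coefj s k e2 j)))
               (fun j => c * (Rabs (/ IZR j) * (R1 j + R2 j))) _ k N (20 / (1 + INR N ^ 2)) b t Hbt).
      + apply (@is_RInt_minus R_NormedModule); exact (RInt_correct _ _ _ (ex_RInt_supcoef _ _ _ _)).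
      + intro j. apply (@is_RInt_scal R_NormedModule), (@is_RInt_scal R_NormedModule), (@is_RInt_plus R_NormedModule);
          exact (RInt_correct _ _ _ (ex_RInt_coefj _ _ _ _ _)).
      + intros s _. eapply Rle_trans; [apply Rle_abs | apply supcoef_dist_eta].
    - enough (sum_around (fun j => c * (Rabs (/ IZR j) * (R1 j + R2 j))) k N <= 120 * PI * Rabs (e1 - e2) / Rabs (IZR k))
        by (unfold Rdiv in *; lra).
      eapply Rle_trans; [apply (sum_around_le _ (fun j => c * (40 * PI / Rabs (IZR k)) * / (1 + IZR (k - j) ^ 2)))|].
      + intro j. rewrite Rmult_assoc. apply Rmult_le_compat_l; [exact Hc|].
        pose proof (RInt_coefj_le k e1 j b t Hbt). pose proof (RInt_coefj_le k e2 j b t Hbt).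
        pose proof (inv_j_jbr_cube_le k j Hk). pose proof (Rabs_pos (/ IZR j)).
        fold (R1 j) (R2 j) in *.
        apply Rle_trans with (20 * PI * (Rabs (/ IZR j) * / jbr (IZR (k - j)) ^ 3)); [nra|].
        apply Rle_trans with (20 * PI * (2 / Rabs (IZR k) * / (1 + IZR (k - j) ^ 2))); [apply Rmult_le_compat_l; lra|].
        right. unfold Rdiv. ring.
      + rewrite sum_around_scal. pose proof (sum_around_inv_sq_le6 k N).
        assert (0 <= c * (40 * PI / Rabs (IZR k))) by (apply Rmult_le_pos; [exact Hc | apply Rdiv_le_0_compat; lra]).
        apply Rle_trans with (c * (40 * PI / Rabs (IZR k)) * 6); [nra|].
        right. unfold c. field. lra. }
  apply Rabs_le. pose proof (one_side eta xi). pose proof (one_side xi eta).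
  rewrite (Rabs_minus_sym xi eta) in H1. lra.
Qed.

Lemma exp_lipschitz X Y M : 0 <= X <= M -> 0 <= Y <= M -> Rabs (exp X - exp Y) <= exp M * Rabs (X - Y).
Proof.
  assert (one_side : forall X Y, Y <= X <= M -> exp X - exp Y <= exp M * (X - Y)).
  { intros X0 Y0 [HYX HXM]. pose proof (exp_ineq1_le (Y0 - X0)).
    assert (E : exp X0 * exp (Y0 - X0) = exp Y0) by (rewrite <- exp_plus; f_equal; ring).
    pose proof (exp_pos X0). pose proof (exp_le_compat _ _ HXM).
    assert (exp X0 * (1 + (Y0 - X0)) <= exp Y0) by (rewrite <- E; apply Rmult_le_compat_l; lra).
    nra. }
  intros HX HY. destruct (Rle_dec Y X).
  - pose proof (exp_le_compat Y X r). rewrite !Rabs_pos_eq by lra. apply one_side. lra.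
  - assert (X <= Y) by lra. pose proof (exp_le_compat X Y H).
    rewrite Rabs_minus_sym, (Rabs_minus_sym X), !Rabs_pos_eq by lra. apply one_side. lra.
Qed.

(** The exponents of [m t k eta] and [m t k xi] differ by [O(|eta - xi| / |k|)]: the extra stretch
    [[entry_time k eta, entry_time k xi]] has length [O(|eta - xi|)] at times where the
    integrand is [O(t / |k|)], and on the common range the integrands are close. *)
Lemma exponent_dist t k eta xi : 0 <= t -> k <> 0%Z -> absKE k eta <= absKE k xi ->
  Rabs (RInt (fun s => supcoef s k eta) (Rmin (entry_time k eta) t) t
        - RInt (fun s => supcoef s k xi) (Rmin (entry_time k xi) t) t)
    <= 580 * Rabs (eta - xi) / Rabs (IZR k).
Proof.
  intros Ht Hk Hle. pose proof (Rabs_IZR_ge1 k Hk) as HK.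
  set (Dl := Rabs (eta - xi)). assert (HDl : 0 <= Dl) by apply Rabs_pos.
  set (a := Rmin (entry_time k eta) t). set (b := Rmin (entry_time k xi) t).
  assert (Hentry : entry_time k eta <= entry_time k xi) by (apply sqrt_le_1_alt; lra).
  assert (Ha0 : 0 <= a) by (apply Rmin_glb; [apply sqrt_pos | exact Ht]).
  assert (Hab : a <= b) by (apply Rle_min_compat_r, Hentry).
  assert (Hbt : b <= t) by apply Rmin_r.
  assert (Hstretch : 0 <= RInt (fun s => supcoef s k eta) a b <= 100 * Dl / Rabs (IZR k)).
  { split; [apply RInt_supcoef_nonneg, Hab|].
    destruct (Req_dec a b) as [<- | Hne].
    { rewrite RInt_point. apply Rdiv_le_0_compat; simpl; lra. }
    assert (Ha : a = entry_time k eta).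
    { destruct (Rle_dec (entry_time k eta) t); [apply Rmin_left; easy|].
      exfalso. assert (a = t) by (apply Rmin_right; lra). lra. }
    eapply Rle_trans; [apply RInt_supcoef_le_after_entry; [exact Hk | lra |]|].
    - unfold inS. rewrite Ha, entry_time_sq. lra.
    - assert (Hb2 : b ^ 2 <= absKE k xi / 10)
        by (rewrite <- entry_time_sq; apply pow_incr; split; [lra | apply Rmin_l]).
      assert (Hgap : absKE k xi - absKE k eta <= Dl).
      { unfold absKE, Dl. pose proof (Rabs_triang_inv xi eta) as Htri. rewrite Rabs_minus_sym in Htri. lra. }
      rewrite Ha, entry_time_sq. apply Rdiv_le_cross; [lra | lra | apply Rmult_le_compat_r; lra]. }
  pose proof (RInt_supcoef_dist_eta k eta xi b t Hk Hbt) as Hcommon. fold Dl in Hcommon.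
  rewrite <- (RInt_Chasles (fun s => supcoef s k eta) a b t) by apply ex_RInt_supcoef.
  unfold plus; simpl. apply Rabs_le_between in Hcommon.
  assert (120 * PI * Dl / Rabs (IZR k) <= 480 * Dl / Rabs (IZR k)) by (pose proof PI_4; apply Rdiv_le_cross; [lra | lra | apply Rmult_le_compat_r; [lra | nra]]).
  assert (580 * Dl / Rabs (IZR k) = 100 * Dl / Rabs (IZR k) + 480 * Dl / Rabs (IZR k)) by (field; lra).
  apply Rabs_le. lra.
Qed.

Lemma m_dist_eta t k eta xi : 0 <= t -> k <> 0%Z ->
  Rabs (m t k eta - m t k xi) <= exp (60 * PI) * 580 * (Rabs (eta - xi) / Rabs (IZR k)).
Proof.
  intros Ht Hk. pose proof (Rabs_IZR_ge1 k Hk).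
  unfold m. rewrite !RInt_dtm_over_m by exact Ht.
  assert (Hbound : forall e, 0 <= RInt (fun s => supcoef s k e) (Rmin (entry_time k e) t) t <= 60 * PI).
  { intro e. pose proof (Rmin_r (entry_time k e) t).
    split; [apply RInt_supcoef_nonneg | apply RInt_supcoef_le]; easy. }
  eapply Rle_trans; [apply exp_lipschitz; apply Hbound|].
  replace (exp (60 * PI) * 580 * (Rabs (eta - xi) / Rabs (IZR k)))
    with (exp (60 * PI) * (580 * Rabs (eta - xi) / Rabs (IZR k))) by (field; lra).
  apply Rmult_le_compat_l; [apply Rlt_le, exp_pos|].
  destruct (Rle_dec (absKE k eta) (absKE k xi)).
  - apply exponent_dist; easy.
  - rewrite Rabs_minus_sym, (Rabs_minus_sym eta). apply exponent_dist; [easy | easy | lra].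
Qed.

Theorem lemma4p4 :
  (* (i) *)
  (exists C : R, forall (t : R) (k : Z) (eta : R), 0 <= t ->
     1 <= m t k eta /\ m t k eta <= C)
  /\
  (* (ii) *)
  (exists C : R, 0 < C /\
     forall (t : R) (k : Z) (eta : R) (l : Z) (xi : R),
       0 <= t -> k <> 0%Z -> inS t l xi ->
       1 / (1 + Rabs (t - eta / IZR k))
         <= C * (sqrt (dtm_over_m t l xi) * (jbrKE (k - l) (eta - xi))^3))
  /\
  (* (iii) *)
  (exists C : R, 0 < C /\
     forall (t : R) (k : Z) (eta : R) (l : Z) (xi : R),
       1 <= t -> k <> 0%Z -> absKE k eta <= 2 * absKE l xi ->
       absKE k eta / (IZR k)^2 * (1 / (1 + (Rabs (t - eta / IZR k))^2))
         <= C * (sqrt (jbr (eta / (IZR k)^3)) / (1 + Rabs (t - eta / IZR k))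
                   * (1 + sqrt t * sqrt (dtm_over_m t l xi))
                   * (jbrKE (k - l) (eta - xi))^5
                 + 1 / (jbr t)^2))
  /\
  (* (iv) *)
  (exists C : R, 0 < C /\
     forall (t eta xi : R) (k : Z), 0 <= t -> k <> 0%Z ->
       Rabs (m t k eta - m t k xi) <= C * (Rabs (eta - xi) / Rabs (IZR k))).
Proof.
  split; [| split; [| split]].
  - exists (exp (60 * PI)). intros t k eta Ht. apply m_bounds, Ht.
  - exists 1. split; [lra|]. intros t k eta l xi _ Hk HS.
    pose proof (sqrt_dtm_over_m_ge t k eta l xi HS Hk) as Hlow.
    pose proof (jbrKE_ge1 (k - l) (eta - xi)). pose proof (Rabs_pos (t - eta / IZR k)).
    assert (0 < jbrKE (k - l) (eta - xi) ^ 3) by (apply pow_lt; lra).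
    apply Rmult_le_compat_r with (r := jbrKE (k - l) (eta - xi) ^ 3) in Hlow; [|lra].
    replace (1 / ((1 + Rabs (t - eta / IZR k)) * jbrKE (k - l) (eta - xi) ^ 3) * jbrKE (k - l) (eta - xi) ^ 3)
      with (1 / (1 + Rabs (t - eta / IZR k))) in Hlow by (field; lra). lra.
  -
    exists 8. split; [lra|]. intros t k eta l xi Ht Hk _. apply part_iii_bound; easy.
  - exists (exp (60 * PI) * 580). split; [pose proof (exp_pos (60 * PI)); lra|].
    intros t eta xi k Ht Hk. apply m_dist_eta; easy.
Qed.
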